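(* Let $k\ge 1$, let $a\in\mathbb{C}$ with $a\neq 0$, let $a_1,\dots,a_k,a_1^*,\dots,a_k^*\in\mathbb{Q}$, and let $\zeta_1,\dots,\zeta_k,\zeta_1^*,\dots,\zeta_k^*$ be roots of unity such that $$\sum_{i=1}^k a_i\zeta_i=a,\qquad \sum_{j=1}^k a_j^*\zeta_j^*=a,$$ and such that $\sum_{i\in I}a_i\zeta_i\neq 0$ for every $I$ with $\emptyset\neq I\subsetneq[k]$ and $\sum_{j\in J}a_j^*\zeta_j^*\neq 0$ for every $J$ with $\emptyset\neq J\subsetneq[k]$. Let $m=\prod_{p\le 2k,\ p\text{ prime}}p$. Then for every $j\in[k]$ there is an $i\in[k]$ such that $(\zeta_j^*/\zeta_i)^m=1$.
   Context: $[k]=\{1,\dots,k\}$. *)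

From mathcomp Require Import all_boot all_order all_algebra.
Set Implicit Arguments. Unset Strict Implicit. Unset Printing Implicit Defensive.
Import GRing.Theory.
Local Open Scope ring_scope.

Definition is_root_of_unity (C : nzRingType) (z : C) : Prop :=
  exists2 n : nat, (0 < n)%N & (n.-unity_root z).

Definition primorial2 (k : nat) : nat := (\prod_(p < (2 * k).+1 | prime p) p)%N.

From mathcomp Require Import all_boot all_order all_algebra.
From mathcomp Require Import algC cyclotomic cyclic separable zify.
Set Implicit Arguments. Unset Strict Implicit. Unset Printing Implicit Defensive.

(* Subtracting the two representations of [a] gives a vanishing rational
   combination of the [z i] and [zs j]. A minimal vanishing subsum through
   [zs j] must contain some [z i], since no nonempty part of the second
   representation vanishes, and Mann's theorem bounds the order of the ratios
   of the roots of unity in a minimal vanishing sum over [S] by the product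
   of the primes [<= #|S|].
   Mann's theorem goes by induction on a common order [N] of the roots. If [N]
   is squarefree with all prime factors [<= #|S|] it divides that product.
   Otherwise take a prime [p] with [p ^ 2 %| N] or [p > #|S|], [N = p * M],
   and write the roots as powers [x ^+ e] of a primitive [N]-th root [x]. The
   Galois conjugations [x |-> x ^+ (1 + M * t)], for the [t < p] with
   [1 + M * t] coprime to [N] (all [t] if [p %| M], all but one otherwise),
   keep the sum vanishing and multiply [x ^+ e] by [(x ^+ M) ^+ (t * e)].
   After shifting exponents so that their residues mod [p] take fewer values
   than there are such [t] (when [p > #|S|] some residue is free), a
   polynomial in the [p]-th root of unity [x ^+ M] with that many roots must
   vanish, so the sum over each residue class vanishes. By minimality all
   exponents are congruent mod [p], hence the ratios are [M]-th roots of
   unity and the induction hypothesis applies. *)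

Definition primorial n := (\prod_(p < n.+1 | prime p) p)%N.

Lemma primorial_dvdn m n : m <= n -> primorial m %| primorial n.
Proof.
move=> le_mn; rewrite /primorial (big_ord_widen_cond n.+1 prime id) //.
by rewrite [X in _ %| X](bigID (fun i : 'I_n.+1 => i < m.+1)) /= dvdn_mulr.
Qed.

Lemma dvdn_primorial N n : 0 < N ->
  (forall p, p \in primes N -> ~~ (p ^ 2 %| N) && (p <= n)) -> N %| primorial n.
Proof.
move=> N_gt0 sqfree; apply/(dvdn_partP _ N_gt0) => p.
rewrite mem_primes => /and3P[p_pr _ pN].
have /andP[p2N le_pn] : ~~ (p ^ 2 %| N) && (p <= n).
  by apply: sqfree; rewrite mem_primes p_pr N_gt0.
have logN1 : logn p N = 1.
  have : 0 < logn p N by rewrite logn_gt0 mem_primes p_pr N_gt0.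
  by move: p2N; rewrite pfactor_dvdn //; lia.
rewrite p_part logN1 expn1 /primorial (bigD1 (Ordinal (le_pn : p < n.+1))) //=.
exact: dvdn_mulr.
Qed.

Lemma coprime_1addM M t : coprime (1 + M * t) M.
Proof. by rewrite -coprime_modl addnC mulnC modnMDl coprime_modl coprime1n. Qed.

(* For [x] a primitive [p * M]-th root of unity, [x |-> x ^+ (1 + M * t)] is a
   Galois conjugation exactly when [t \in coprime_twists p M]. *)
Definition coprime_twists p M : {set 'I_p} :=
  [set t : 'I_p | coprime (1 + M * t) (p * M)].

Lemma coprime_twistsT p M : p %| M -> coprime_twists p M = setT.
Proof.
move=> pM; apply/setP => t; rewrite !inE coprimeMr coprime_1addM andbT.
exact: coprime_dvdr pM (coprime_1addM M t).
Qed.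

Lemma card_coprime_twists p M : prime p -> p.-1 <= #|coprime_twists p M|.
Proof.
move=> p_pr; have [pM|pM] := boolP (p %| M).
  by rewrite coprime_twistsT // cardsT card_ord leq_pred.
suff : #|~: coprime_twists p M| <= 1.
  by rewrite cardsCs setCK card_ord; lia.
have bad t : t \in ~: coprime_twists p M -> p %| 1 + M * t.
  by rewrite !inE coprimeMr coprime_1addM andbT coprime_sym prime_coprime ?negbK.
apply/card_le1_eqP => t1 t2 /bad pt1 /bad pt2.
wlog le_t12 : t1 t2 pt1 pt2 / t1 <= t2 => [wlog_t12 | ].
  by case: (leqP t1 t2) => [|/ltnW] le; [|apply/esym]; apply: wlog_t12.
have : p %| M * (t2 - t1) by rewrite mulnBr -(subnDl 1) dvdn_sub.
rewrite Gauss_dvdr ?prime_coprime // => p_t21.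
case: (posnP (t2 - t1)) => [t21 | /dvdn_leq/(_ p_t21) p_le].
  by apply/val_inj/eqP; rewrite eqn_leq -subn_eq0 t21 le_t12.
by have := leq_trans p_le (leq_subr t1 t2); rewrite leqNgt ltn_ord.
Qed.

Lemma exists_residue_shift (T : finType) (S : {set T}) (e : T -> nat) p :
  #|S| < p -> exists h, forall s, s \in S -> (e s + h) %% p < p.-1.
Proof.
move=> S_lt_p; have p_gt0 : 0 < p by lia.
have [rho rho_lt rho_notin] : exists2 rho, rho < p & rho \notin [seq e s %% p | s in S].
  case: (boolP (all (mem [seq e s %% p | s in S]) (iota 0 p))) => [/allP sub|].
    by have := uniq_leq_size (iota_uniq 0 p) sub; rewrite size_iota size_map -cardE; lia.
  by case/allPn => rho; rewrite mem_iota; exists rho.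
exists (p.-1 - rho) => s Ss; have := ltn_pmod (e s + (p.-1 - rho)) p_gt0.
suff : (e s + (p.-1 - rho)) %% p != p.-1 by lia.
apply: contra rho_notin => /eqP res_s; apply/imageP; exists s => //.
have : e s + (p.-1 - rho) == rho + (p.-1 - rho) %[mod p].
  by rewrite res_s modn_small; lia.
by rewrite eqn_modDr (modn_small rho_lt) => /eqP.
Qed.

Import GRing.Theory Num.Theory.
Local Open Scope ring_scope.

Lemma closed_prim_root_exists (F : closedFieldType) n :
  n%:R != 0 :> F -> exists z : F, n.-primitive_root z.
Proof.
move=> n_neq0; have n_gt0 : (0 < n)%N by rewrite lt0n; apply: contraNneq n_neq0 => ->.
have [r Dp] := closed_field_poly_normal ('X^n - 1 : {poly F}).
rewrite (monicP (monicXnsubC 1 n_gt0)) scale1r in Dp.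
have r_unity : all n.-unity_root r by apply/allP => z; rewrite -root_prod_XsubC -Dp.
have size_r : (n < (size r).+1)%N by rewrite -(size_prod_XsubC r id) -Dp size_XnsubC.
have [|z _ prim_z] := hasP (has_prim_root n_gt0 r_unity _ size_r); last by exists z.
by rewrite -separable_prod_XsubC -Dp separable_Xn_sub_1.
Qed.

Lemma root_prod (R : idomainType) (I : Type) (r : seq I) (F : I -> {poly R}) x :
  root (\prod_(i <- r) F i) x = has (fun i => root (F i) x) r.
Proof.
by elim: r => [|i r IHr]; rewrite ?big_nil ?rootC ?oner_eq0 // big_cons rootM IHr.
Qed.

Lemma root_Cyclotomic (R : idomainType) n (z : R) :
  n.-primitive_root z -> root (map_poly intr 'Phi_n) z.
Proof.
move=> prim_z; have n_gt0 := prim_order_gt0 prim_z.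
have root_Xn1 d : (0 < d)%N -> root ('X^d - 1) z =
    has (fun d' => root (map_poly intr 'Phi_d') z) (divisors d).
  move=> d_gt0; rewrite -root_prod -rmorph_prod /= prod_Cyclotomic //.
  by rewrite rmorphB /= rmorph1 map_polyXn.
have := root_Xn1 n n_gt0; rewrite rootE !hornerE prim_expr_order // subrr eqxx.
case/esym/hasP => d; rewrite -dvdn_divisors // => dvd_dn Phi_dz.
have d_gt0 := dvdn_gt0 n_gt0 dvd_dn.
have : root ('X^d - 1) z.
  by rewrite root_Xn1 //; apply/hasP; exists d; rewrite -?dvdn_divisors.
rewrite rootE !hornerE subr_eq0 -(prim_order_dvd prim_z) => dvd_nd.
suff -> : n = d by [].
by apply/anti_leq; rewrite (dvdn_leq n_gt0 dvd_dn) (dvdn_leq d_gt0 dvd_nd).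
Qed.

Lemma ratr_Cyclotomic (F : numFieldType) n :
  map_poly (ratr : rat -> F) (map_poly intr 'Phi_n) = map_poly intr 'Phi_n.
Proof. by rewrite -map_poly_comp; apply: eq_map_poly => b /=; rewrite rmorph_int. Qed.

(* Irreducibility of ['Phi_n] over [rat], read off [minCpoly] in [algC]: a root
   in [algC] of [gcdp Phi q] is again a primitive [n]-th root of unity. *)
Lemma Cyclotomic_dvdp (C : numClosedFieldType) n (z : C) (q : {poly rat}) :
  n.-primitive_root z -> root (map_poly ratr q) z -> map_poly intr 'Phi_n %| q.
Proof.
move=> prim_z qz; have n_gt0 := prim_order_gt0 prim_z.
set Phi : {poly rat} := map_poly intr 'Phi_n.
have Phi_min (w : algC) r : n.-primitive_root w -> root (map_poly ratr r) w -> Phi %| r.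
  move=> prim_w; have [pw [Dpw _] ->] := minCpolyP w; suff -> : pw = Phi by [].
  apply: (map_poly_inj (ratr : {rmorphism rat -> algC})).
  by rewrite -Dpw ratr_Cyclotomic (minCpoly_cyclotomic prim_w) (Cintr_Cyclotomic prim_w).
set g := gcdp Phi q.
have gz : root (map_poly ratr g) z.
  by rewrite gcdp_map root_gcd qz ratr_Cyclotomic root_Cyclotomic.
have size_g : size (map_poly (ratr : rat -> algC) g) != 1%N.
  rewrite size_map_poly -(size_map_poly (ratr : {rmorphism rat -> C})) neq_ltn.
  rewrite (root_size_gt1 _ gz) ?orbT // map_poly_eq0 gcdp_eq0 negb_and.
  by rewrite monic_neq0 // monic_map // Cyclotomic_monic.
have [w gw] := closed_rootP _ size_g.
have prim_w : n.-primitive_root w.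
  have [y prim_y] := C_prim_root_exists n_gt0.
  rewrite -(root_cyclotomic prim_y) -(Cintr_Cyclotomic prim_y) -ratr_Cyclotomic.
  by apply: root_dvdp gw; rewrite dvdp_map dvdp_gcdl.
exact: dvdp_trans (Phi_min w g prim_w gw) (dvdp_gcdr Phi q).
Qed.

Lemma root_ratr_prim_exp_coprime (C : numClosedFieldType) n (z : C) (q : {poly rat}) u :
  n.-primitive_root z -> coprime u n ->
  root (map_poly ratr q) z -> root (map_poly ratr q) (z ^+ u).
Proof.
move=> prim_z co_un /(Cyclotomic_dvdp prim_z).
rewrite -(dvdp_map (ratr : {rmorphism rat -> C})) => /root_dvdp; apply.
by rewrite ratr_Cyclotomic root_Cyclotomic ?prim_root_exp_coprime.
Qed.

Lemma sum_prim_exp_coprime_eq0 (C : numClosedFieldType) (I : finType) (S : {set I})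
    (c : I -> rat) (e : I -> nat) n (z : C) u :
  n.-primitive_root z -> coprime u n ->
  \sum_(i in S) ratr (c i) * z ^+ e i = 0 ->
  \sum_(i in S) ratr (c i) * (z ^+ u) ^+ e i = 0.
Proof.
move=> prim_z co_un; pose q : {poly rat} := \sum_(i in S) c i *: 'X^(e i).
have q_eval y : (map_poly ratr q).[y] = \sum_(i in S) ratr (c i) * y ^+ e i :> C.
  rewrite raddf_sum horner_sum; apply: eq_bigr => i _ /=.
  by rewrite map_polyZ map_polyXn hornerZ hornerXn.
rewrite -!q_eval => /eqP qz; apply/eqP.
exact: root_ratr_prim_exp_coprime prim_z co_un qz.
Qed.

Definition minimal_vanishing (V : nmodType) (T : finType) (F : T -> V) (S : {set T}) :=
  \sum_(t in S) F t = 0 /\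
  forall S' : {set T}, S' \proper S -> S' != set0 -> \sum_(t in S') F t != 0.

Lemma minimal_vanishing_sub (V : nmodType) (T : finType) (F : T -> V)
    (S S' : {set T}) :
  minimal_vanishing F S -> S' \subset S -> \sum_(t in S') F t = 0 ->
  S' = set0 \/ S' = S.
Proof.
move=> [_ minS] subS'S sumS'.
have [->|S'_neq0] := eqVneq S' set0; first by left.
have [->|S'_neqS] := eqVneq S' S; first by right.
by have := minS S'; rewrite properEneq S'_neqS subS'S sumS' eqxx => /(_ isT S'_neq0).
Qed.

Lemma minimal_vanishing_scale (R : idomainType) (T : finType) (F G : T -> R)
    (S : {set T}) x :
  x != 0 -> (forall t, G t = F t * x) ->
  minimal_vanishing F S -> minimal_vanishing G S.
Proof.
move=> x_neq0 DG [sumS minS].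
have sumG A : \sum_(t in A) G t = (\sum_(t in A) F t) * x.
  by rewrite mulr_suml; apply: eq_bigr => t _; rewrite DG.
by split=> [|S' ltS'S S'_neq0]; rewrite sumG ?sumS ?mul0r // mulf_neq0 ?minS.
Qed.

Lemma minimal_vanishing_exists (V : nmodType) (T : finType) (F : T -> V)
    (S : {set T}) t0 :
  t0 \in S -> \sum_(t in S) F t = 0 ->
  exists S' : {set T}, [/\ t0 \in S', S' \subset S & minimal_vanishing F S'].
Proof.
move=> t0S sumS.
pose P (A : {set T}) := [&& t0 \in A, A \subset S & \sum_(t in A) F t == 0].
have PS : P S by rewrite /P t0S subxx sumS eqxx.
case: (arg_minnP (fun A : {set T} => #|A|) PS) => A /and3P[t0A subAS /eqP sumA] minA.
exists A; split=> //; split=> // B ltBA B_neq0; apply/eqP => sumB.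
have subBA := proper_sub ltBA.
have B_gt0 : (0 < #|B|)%N by rewrite card_gt0.
case t0B : (t0 \in B).
  have /minA : P B by rewrite /P t0B sumB eqxx (subset_trans subBA).
  by rewrite leqNgt proper_card.
have /minA : P (A :\: B).
  rewrite /P !inE t0B t0A (subset_trans (subsetDl A B)) //=.
  by move: sumA; rewrite (big_setID B) /= (setIidPr subBA) sumB add0r => ->.
rewrite cardsDS //; have := subset_leq_card subBA; lia.
Qed.

Section Mann.

Variables (C : numClosedFieldType) (T : finType) (c : T -> rat).

Lemma residue_class_sums_eq0 p M (x : C) (S : {set T}) (e : T -> nat) h :
  prime p -> (p * M).-primitive_root x ->
  \sum_(s in S) ratr (c s) * x ^+ e s = 0 ->
  (forall s, s \in S -> (e s + h) %% p < #|coprime_twists p M|)%N ->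
  forall j, \sum_(s in S | ((e s + h) %% p)%N == j) ratr (c s) * x ^+ e s = 0.
Proof.
move=> p_pr prim_x sumS residue_lt j.
have prim_y : p.-primitive_root (x ^+ M).
  by have := dvdn_prim_root prim_x (dvdn_mulr M (dvdnn p)); rewrite mulKn ?prime_gt0.
set y := x ^+ M.
(* [G.[y ^+ t]] is [y ^+ (t * h)] times the conjugate of the sum under
   [x |-> x ^+ (1 + M * t)]. *)
pose G : {poly C} :=
  \sum_(s in S) (ratr (c s) * x ^+ e s) *: 'X^((e s + h) %% p).
have G_eq0 : G = 0.
  apply/eqP; apply: contraT => G_neq0.
  pose rs := [seq y ^+ t | t : 'I_p <- enum (coprime_twists p M)].
  have size_G : (size G <= #|coprime_twists p M|)%N.
    apply: leq_trans (size_sum _ _ _) _; apply/bigmax_leqP => s Ss.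
    by apply: leq_trans (size_scale_leq _ _) _; rewrite size_polyXn residue_lt.
  have uniq_rs : uniq rs.
    rewrite map_inj_uniq ?enum_uniq // => t1 t2 /eqP.
    by rewrite (eq_prim_root_expr prim_y) !modn_small // => /eqP/val_inj.
  have roots_rs : all (root G) rs.
    apply/allP => r /mapP[t]; rewrite mem_enum inE => twist_t ->.
    have yt_p : (y ^+ t) ^+ p = 1.
      by rewrite -exprM mulnC exprM (prim_expr_order prim_y) expr1n.
    have := sum_prim_exp_coprime_eq0 prim_x twist_t sumS.
    rewrite /root /G horner_sum => sum_t; apply/eqP.
    transitivity (y ^+ (t * h) * \sum_(s in S) ratr (c s) * (x ^+ (1 + M * t)) ^+ e s).
      rewrite mulr_sumr; apply: eq_bigr => s _.
      rewrite hornerZ hornerXn (expr_mod _ yt_p) -!exprM -mulrA -exprD mulrCA -exprD.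
      by congr (_ * x ^+ _); nia.
    by rewrite sum_t mulr0.
  have := max_poly_roots G_neq0 roots_rs uniq_rs.
  by rewrite size_map -cardE ltnNge size_G.
have := congr1 (coefp j) G_eq0; rewrite /= coef0 /G coef_sum => coef_j.
rewrite -[RHS]coef_j big_mkcondr /=; apply: eq_bigr => s _.
by rewrite coefZ coefXn eq_sym; case: eqP; rewrite ?mulr1 ?mulr0.
Qed.

Lemma minimal_vanishing_ratio_exp (S : {set T}) (w : T -> C) p M :
  minimal_vanishing (fun t => ratr (c t) * w t) S ->
  (forall s, s \in S -> w s ^+ (p * M) = 1) ->
  prime p -> ((p %| M) || (#|S| < p))%N ->
  forall r s, r \in S -> s \in S -> (w r / w s) ^+ M = 1.
Proof.
move=> minS w_unity p_pr p_bad r s rS sS.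
have [->|M_gt0] := posnP M; first by rewrite expr0.
have pM_gt0 : (0 < p * M)%N by rewrite muln_gt0 prime_gt0.
have [x prim_x] : exists x : C, (p * M).-primitive_root x.
  by apply: closed_prim_root_exists; rewrite pnatr_eq0 -lt0n.
have /fin_all_exists[e we] : forall t, exists i : nat, t \in S -> w t = x ^+ i.
  move=> t; case: (boolP (t \in S)) => [tS|]; last by exists 0%N.
  by have [i ->] := prim_rootP prim_x (w_unity t tS); exists i.
have sumS : \sum_(t in S) ratr (c t) * x ^+ e t = 0.
  by rewrite -[RHS]minS.1; apply: eq_bigr => t tS; rewrite we.
have [h residue_lt] : exists h, forall t, t \in S ->
    ((e t + h) %% p < #|coprime_twists p M|)%N.
  case/orP: p_bad => [pM | S_lt_p].
    exists 0%N => t _; rewrite coprime_twistsT // cardsT card_ord.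
    by rewrite ltn_pmod ?prime_gt0.
  have [h res_lt] := exists_residue_shift e S_lt_p; exists h => t tS.
  exact: leq_trans (res_lt t tS) (card_coprime_twists M p_pr).
have class_r : (e r == e s %[mod p])%N.
  pose S' := [set t in S | ((e t + h) %% p == (e s + h) %% p)%N].
  have sS' : s \in S' by rewrite inE sS eqxx.
  have [S'0 | S'S] : S' = set0 \/ S' = S.
    apply: minimal_vanishing_sub minS _ _.
      by apply/subsetP => t; rewrite inE => /andP[].
    rewrite -[RHS](residue_class_sums_eq0 p_pr prim_x sumS residue_lt ((e s + h) %% p)%N).
    rewrite (eq_bigl (fun t => (t \in S) && ((e t + h) %% p == (e s + h) %% p)%N));
      last by move=> t; rewrite inE.
    by apply: eq_bigr => t /andP[tS _]; rewrite we.
    by rewrite S'0 inE in sS'.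
  by move: rS; rewrite -S'S inE eqn_modDr => /andP[].
have x_neq0 : x != 0 by rewrite (prim_root_eq0 prim_x) -lt0n.
rewrite !we // exprMn exprVn -!exprM.
suff -> : x ^+ (e r * M) = x ^+ (e s * M) by rewrite divff // expf_neq0.
by apply/eqP; rewrite (eq_prim_root_expr prim_x) -!muln_modl (eqP class_r).
Qed.

Theorem Mann (S : {set T}) (w : T -> C) N :
  (0 < N)%N -> minimal_vanishing (fun t => ratr (c t) * w t) S ->
  (forall s, s \in S -> w s ^+ N = 1) ->
  forall s t, s \in S -> t \in S -> (w s / w t) ^+ primorial #|S| = 1.
Proof.
elim/ltn_ind: N w => N IHN w N_gt0 minS w_unity s t sS tS.
have [/hasP[p] | no_bad_p] :=
  boolP (has (fun p => (p ^ 2 %| N) || (#|S| < p))%N (primes N)).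
  rewrite mem_primes N_gt0 => /andP[p_pr /dvdnP[M DN]] p_bad.
  rewrite mulnC in DN; rewrite {}DN in N_gt0 p_bad w_unity IHN.
  have M_gt0 : (0 < M)%N by move: N_gt0; rewrite muln_gt0 => /andP[].
  have {}p_bad : ((p %| M) || (#|S| < p))%N.
    by rewrite expnS expn1 dvdn_pmul2l ?prime_gt0 in p_bad.
  have ratio := minimal_vanishing_ratio_exp minS w_unity p_pr p_bad.
  have wt_neq0 : w t != 0.
    apply/eqP => wt0; have := w_unity t tS.
    by rewrite wt0 expr0n eqn0Ngt N_gt0 => /esym/eqP; rewrite oner_eq0.
  have minS' : minimal_vanishing (fun r => ratr (c r) * (w r / w t)) S.
    by apply: minimal_vanishing_scale (invr_neq0 wt_neq0) _ minS => r; rewrite mulrA.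
  have M_lt_N := ltn_Pmull (prime_gt1 p_pr) M_gt0.
  have := IHN M M_lt_N _ M_gt0 minS' (fun r rS => ratio r t rS tS) s t sS tS.
  by rewrite divff // divr1.
have /dvdnP[L ->] : (N %| primorial #|S|)%N.
  by apply: dvdn_primorial => // p /(hasPn no_bad_p); rewrite negb_or -leqNgt.
by rewrite mulnC exprM exprMn exprVn !w_unity // invr1 mulr1 expr1n.
Qed.

End Mann.

Lemma root_of_unity_common_exp (R : nzRingType) (I : finType) (w : I -> R) :
  (forall i, is_root_of_unity (w i)) -> exists2 N, (0 < N)%N & forall i, w i ^+ N = 1.
Proof.
move=> /fin_all_exists2[n n_gt0 unity_n]; exists (\prod_i n i)%N.
  exact: prodn_gt0.
move=> i; rewrite (bigD1 i) //= exprM.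
by move/unity_rootP: (unity_n i) => ->; rewrite expr1n.
Qed.

Lemma vanishing_set_has_inl (V : nmodType) (I1 I2 : finType) (F : I1 + I2 -> V)
    (S : {set I1 + I2}) j :
  (forall J : {set I2}, J != set0 -> \sum_(j' in J) F (inr j') != 0) ->
  inr j \in S -> \sum_(t in S) F t = 0 -> exists i, inl i \in S.
Proof.
move=> sum_inr_neq0 jS sumS; apply/existsP; apply: contraT => /existsPn notinl.
have J_neq0 : [set j' | inr j' \in S] != set0 by apply/set0Pn; exists j; rewrite inE.
move: (sum_inr_neq0 _ J_neq0); rewrite -[X in _ != X]sumS big_sumType.
rewrite big_pred0 => [|i]; last exact: negbTE.
suff -> : \sum_(j' in [set j' | inr j' \in S]) F (inr j') =
          \sum_(j' | inr j' \in S) F (inr j').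
  by rewrite /= add0r eqxx.
by apply: eq_bigl => j'; rewrite inE.
Qed.

Unset Implicit Arguments.
Theorem theorem6 (C : numClosedFieldType) (k : nat) (hk : (1 <= k)%N)
  (a : C) (ha : a != 0)
  (as_ bs : 'I_k -> rat) (z zs : 'I_k -> C)
  (hz : forall i, is_root_of_unity (z i))
  (hzs : forall j, is_root_of_unity (zs j))
  (hsum : \sum_(i < k) ratr (as_ i) * z i = a)
  (hsums : \sum_(j < k) ratr (bs j) * zs j = a)
  (hmin : forall I : {set 'I_k}, I != set0 -> I != setT ->
            \sum_(i in I) ratr (as_ i) * z i != 0)
  (hmins : forall J : {set 'I_k}, J != set0 -> J != setT ->
            \sum_(j in J) ratr (bs j) * zs j != 0) :
  forall j : 'I_k, exists i : 'I_k, (zs j / z i) ^+ primorial2 k = 1.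
Proof.
move=> j.
pose c t := match t with inl i => as_ i | inr j' => - bs j' end.
pose w t := match t with inl i => z i | inr j' => zs j' end.
have sum_zs_neq0 J : J != set0 -> \sum_(j in J) ratr (bs j) * zs j != 0.
  move=> J_neq0; have [->|JT] := eqVneq J setT; last exact: hmins.
  by rewrite (eq_bigl xpredT) => [|j']; rewrite ?hsums ?inE.
have sumT : \sum_(t in setT) ratr (c t) * w t = 0.
  rewrite (eq_bigl xpredT) => [|t]; last by rewrite inE.
  rewrite big_sumType /= hsum; under eq_bigr do rewrite rmorphN mulNr.
  by rewrite sumrN hsums subrr.
have [S [jS _ minS]] := minimal_vanishing_exists (in_setT (inr j)) sumT.
have [i iS] : exists i, inl i \in S.
  apply: vanishing_set_has_inl jS minS.1 => J J_neq0 /=.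
  under eq_bigr do rewrite rmorphN mulNr.
  by rewrite sumrN oppr_eq0 sum_zs_neq0.
have [N N_gt0 w_unity] : exists2 N, (0 < N)%N & forall t, w t ^+ N = 1.
  by apply: root_of_unity_common_exp => -[].
have ratio := Mann N_gt0 minS (fun t _ => w_unity t) jS iS.
have /dvdnP[L ->] : (primorial #|S| %| primorial2 k)%N.
  apply: (primorial_dvdn (n := 2 * k)); apply: leq_trans (max_card S) _.
  by rewrite card_sum card_ord addnn -mul2n.
by exists i; rewrite mulnC exprM ratio expr1n.
Qed.
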